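(* Let $m\ge1$, $q=2^m$, let $n$ be odd, and let $L(x)=ax^{2^k}+bx^{2^l}$ with $a,b\in\mathbb F_{q^n}$ and integers $0\le k,l<mn$, such that $L$ is nonzero as a map on $\mathbb F_{q^n}$. Let $d=\gcd(l-k,mn)$ and $s=\gcd(k-1,m)$. (1) If $k\equiv l\pmod m$, then $\mathrm{Tr}(x^{q+1})+L(x)$ is a permutation polynomial of $\mathbb F_{q^n}$ if and only if either (a) $a+b\in\mathbb F_q^*$, $(a+b)^{\frac{q-1}{2^s-1}}\ne1$ and $a^{\frac{q^n-1}{2^d-1}}\ne b^{\frac{q^n-1}{2^d-1}}$; or (b) $a+b=0$, $d=m$ and $\mathrm{Tr}(a^{-1})\ne0$. (2) If $k\not\equiv l\pmod m$ and $l\equiv1\pmod m$, then $\mathrm{Tr}(x^{q+1})+L(x)$ is a permutation polynomial of $\mathbb F_{q^n}$ if and only if $a,b\in\mathbb F_q$, $a^{\frac{q-1}{2^s-1}}\ne(b+1)^{\frac{q-1}{2^s-1}}$, and either $a^{\frac{q^n-1}{2^d-1}}\ne b^{\frac{q^n-1}{2^d-1}}$, or $d$ divides $m$ and $a^{\frac{q-1}{2^d-1}}=b^{\frac{q-1}{2^d-1}}$. (3) In particular, if $b=0$, then $\mathrm{Tr}(x^{q+1})+ax^{2^k}$ is a permutation polynomial of $\mathbb F_{q^n}$ if and only if $a\in\mathbb F_q^*$ and $a^{\frac{q-1}{2^s-1}}\ne1$.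
   Context: $\mathrm{Tr}$ denotes the trace map of $\mathbb F_{q^n}$ over $\mathbb F_q$. Polynomials are regarded as maps on $\mathbb F_{q^n}$; a permutation polynomial of a field is one inducing a bijection of that field. *)

From HB Require Import structures.
From mathcomp Require Import all_boot all_order all_algebra all_field.
Set Implicit Arguments. Unset Strict Implicit. Unset Printing Implicit Defensive.
Import GRing.Theory.
Local Open Scope ring_scope.

(* distance |i - j| between natural numbers (so that gcd(l-k, mn) and
   gcd(k-1, m) are computed correctly even when the difference is negative) *)
Definition distn (i j : nat) : nat := (maxn i j - minn i j)%N.

Definition Tr (F : finFieldType) (m n : nat) (y : F) : F :=
  \sum_(i < n) y ^+ ((2 ^ m) ^ i).

Definition inFq (F : finFieldType) (m : nat) (y : F) : bool := y ^+ (2 ^ m) == y.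

Definition fmap (F : finFieldType) (m n k l : nat) (a b : F) (x : F) : F :=
  Tr m n (x ^+ (2 ^ m + 1)) + a * x ^+ (2 ^ k) + b * x ^+ (2 ^ l).

Definition is_PP (F : finFieldType) (f : F -> F) : Prop := bijective f.

(* Write f x = Tr (x^(q+1)) + L x with the additive map L x = a x^(2^k) + b x^(2^l).
   Since f (x + u) = f x + Tr (x (u^q + u^(q^(n-1)))) + Tr (u^(q+1)) + L u, where
   u^q + u^(q^(n-1)) vanishes exactly on F_q (n odd) and x |-> Tr (x w) maps onto F_q
   for w <> 0, f permutes the field iff (A) L u \in F_q forces u \in F_q and
   (B) L u <> u^2 on F_q^*.  A counting argument shows that (A) makes L stabilize F_q,
   which in case (2) forces a, b \in F_q.  Both conditions then concern the equation
   al u^(2^k) = be u^(2^l) over a subfield F_(2^M): as F_(2^M)^* is cyclic and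
   gcd (2^i - 1, 2^j - 1) = 2^gcd(i,j) - 1, it has a nonzero solution iff al^E = be^E
   with E = (2^M - 1) / (2^gcd(|k-l|,M) - 1), and its nonzero solutions form a coset
   of F_(2^d)^*.  When a + b = 0 and k = l mod m, L x = a (y + y^(2^|l-k|)) with
   y = x^(2^min(k,l)), and (A) is decided by the additive Hilbert 90. *)

From mathcomp Require Import all_boot all_order all_algebra all_field.
From mathcomp Require Import cyclic zify ring.
Import GRing.Theory.
Local Open Scope ring_scope.
Set Implicit Arguments. Unset Strict Implicit. Unset Printing Implicit Defensive.

Lemma distnC i j : distn i j = distn j i.
Proof. by rewrite /distn maxnC minnC. Qed.

Lemma distnE i j : (i <= j)%N -> distn j i = (j - i)%N.
Proof. by move=> le_ij; rewrite /distn (maxn_idPl le_ij) (minn_idPr le_ij). Qed.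

Lemma eqn_mod_distn M i j : (i == j %[mod M])%N = (M %| distn i j)%N.
Proof.
wlog le_ij : i j / (i <= j)%N.
  by move=> W; case/orP: (leq_total i j) => /W //; rewrite eq_sym distnC.
by rewrite distnC distnE // eq_sym eqn_mod_dvd.
Qed.

Lemma gcdn_exp2_sub1 i j : gcdn (2 ^ i - 1) (2 ^ j - 1) = (2 ^ gcdn i j - 1)%N.
Proof.
elim: {i j}(i + j)%N {-2}i {-2}j (leqnn (i + j)) => [|N IH] i j.
  by rewrite leqn0 addn_eq0 => /andP[/eqP-> /eqP->].
wlog le_ij : i j / (i <= j)%N.
  move=> W; case/orP: (leq_total i j) => /W W' ?; rewrite ?W' //.
  by rewrite gcdnC [gcdn i j]gcdnC W' // addnC.
have [-> _|i_gt0 le_ijN] := posnP i; first by rewrite !gcd0n.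
rewrite -(subnKC le_ij) gcdnDl; set c := (j - i)%N.
have -> : (2 ^ (i + c) - 1 = 2 ^ c * (2 ^ i - 1) + (2 ^ c - 1))%N.
  rewrite expnD; have := expn_gt0 2 i; have := expn_gt0 2 c; nia.
by rewrite gcdnMDl IH //; lia.
Qed.

Lemma dvdn_exp2_sub1 d M : (2 ^ d - 1 %| 2 ^ M - 1)%N = (d %| M)%N.
Proof.
apply/idP/idP => [/gcdn_idPl|/gcdn_idPl dM]; last by rewrite -dM -gcdn_exp2_sub1 dvdn_gcdr.
rewrite gcdn_exp2_sub1 => e.
have /eqP : (2 ^ gcdn d M = 2 ^ d)%N by have := expn_gt0 2 d; have := expn_gt0 2 (gcdn d M); lia.
by rewrite eqn_exp2l // => /eqP <-; apply: dvdn_gcdr.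
Qed.

Lemma gcdn_mulr_dvd e m n : (gcdn e (m * n) %| m)%N -> gcdn e m = gcdn e (m * n).
Proof.
move=> dvd_m; apply/eqP; rewrite eqn_dvd !dvdn_gcd !dvdn_gcdl dvd_m andbT /=.
by rewrite (dvdn_trans (dvdn_gcdr _ _)) ?dvdn_mulr.
Qed.

Lemma exp2_sub1_divn_gt0 d M : (0 < M)%N -> (d %| M)%N -> (0 < (2 ^ M - 1) %/ (2 ^ d - 1))%N.
Proof.
move=> M_gt0 dM; have d_gt0 := dvdn_gt0 M_gt0 dM.
rewrite divn_gt0 ?subn_gt0 ?leq_sub2r ?leq_exp2l ?(dvdn_leq M_gt0) //.
by rewrite -{1}(expn0 2) ltn_exp2l.
Qed.

Section Frobenius2.
Variables (R : finFieldType) (pcharR : 2 \in [pchar R]).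
Implicit Types (x y c : R) (i j k l M : nat).

Lemma frob_addn i j x : x ^+ (2 ^ (i + j)) = (x ^+ (2 ^ i)) ^+ (2 ^ j).
Proof. by rewrite expnD exprM. Qed.

Lemma frobD j x y : (x + y) ^+ (2 ^ j) = x ^+ (2 ^ j) + y ^+ (2 ^ j).
Proof. by rewrite exprDn_pchar // pnatX pnatE // pcharR. Qed.

Lemma frob_sum j I (r : seq I) (P : pred I) (F : I -> R) :
  (\sum_(i <- r | P i) F i) ^+ (2 ^ j) = \sum_(i <- r | P i) F i ^+ (2 ^ j).
Proof.
apply: (big_morph (fun x => x ^+ (2 ^ j))) => [x y|]; first exact: frobD.
by rewrite expr0n expn_eq0.
Qed.

Lemma addr_eq0_pchar2 x y : (x + y == 0) = (x == y).
Proof. by rewrite addr_eq0 oppr_pchar2. Qed.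

Lemma frob_inj j : injective (fun x : R => x ^+ (2 ^ j)).
Proof.
move=> x y /= e; apply/eqP; rewrite -addr_eq0_pchar2.
have : (x + y) ^+ (2 ^ j) == 0 by rewrite frobD e addrr_pchar2.
by rewrite expf_eq0 expn_gt0.
Qed.

Lemma inFqP M x : reflect (x ^+ (2 ^ M) = x) (inFq M x).
Proof. exact: eqP. Qed.

Lemma inFq0 M : inFq M (0 : R).
Proof. by rewrite /inFq expr0n expn_eq0. Qed.

Lemma inFq1 M : inFq M (1 : R).
Proof. by rewrite /inFq expr1n. Qed.

Lemma inFqD M x y : inFq M x -> inFq M y -> inFq M (x + y).
Proof. by move=> /inFqP x_fix /inFqP y_fix; apply/inFqP; rewrite frobD x_fix y_fix. Qed.

Lemma inFqM M x y : inFq M x -> inFq M y -> inFq M (x * y).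
Proof. by move=> /inFqP x_fix /inFqP y_fix; apply/inFqP; rewrite exprMn x_fix y_fix. Qed.

Lemma inFqV M x : inFq M x -> inFq M x^-1.
Proof. by move=> /inFqP x_fix; apply/inFqP; rewrite exprVn x_fix. Qed.

Lemma inFqX M j x : inFq M x -> inFq M (x ^+ j).
Proof. by move=> /inFqP x_fix; apply/inFqP; rewrite exprAC x_fix. Qed.

Lemma inFq_frob M j x : inFq M (x ^+ (2 ^ j)) = inFq M x.
Proof.
apply/idP/idP => [/inFqP x_fix|]; last exact: inFqX.
by apply/inFqP/(@frob_inj j); rewrite /= exprAC.
Qed.

Lemma inFq_mull M j x : inFq M x -> inFq (M * j) x.
Proof.
move=> /inFqP x_fix; apply/inFqP.
by elim: j => [|j IHj]; rewrite ?muln0 ?expr1 // mulnS frob_addn x_fix.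
Qed.

Lemma inFq_dvdn d M x : (d %| M)%N -> inFq d x -> inFq M x.
Proof. by move=> /dvdnP[j ->]; rewrite mulnC; apply: inFq_mull. Qed.

Lemma frob_eqmod M k l x : inFq M x -> (k = l %[mod M])%N -> x ^+ (2 ^ k) = x ^+ (2 ^ l).
Proof.
move=> x_fix kl.
have frob_mod i : x ^+ (2 ^ i) = x ^+ (2 ^ (i %% M)).
  by rewrite {1}(divn_eq i M) frob_addn mulnC; have /inFqP -> := inFq_mull (i %/ M) x_fix.
by rewrite frob_mod kl -frob_mod.
Qed.

Lemma inFq_gcd i j x : inFq i x -> inFq j x -> inFq (gcdn i j) x.
Proof.
move=> x_i x_j; have [->|i_gt0] := posnP i; first by rewrite gcd0n.
have [u _ /dvdnP[c Euj]] := Bezoutl j i_gt0.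
have /inFqP x_uj := inFq_mull u x_j.
have /inFqP x_ci := inFq_mull c x_i.
apply/inFqP/(@frob_inj (u * j)); rewrite /= -frob_addn Euj mulnC x_ci.
by rewrite mulnC x_uj.
Qed.

Lemma inFq_frob_root M j y : (0 < M)%N -> inFq M y -> (y ^+ (2 ^ (M * j - j))) ^+ (2 ^ j) = y.
Proof.
move=> M_gt0 y_fix; rewrite -frob_addn subnK; first exact/inFqP/inFq_mull.
by rewrite leq_pmull.
Qed.

Lemma frob_eq_distn k l x : (x ^+ (2 ^ k) == x ^+ (2 ^ l)) = inFq (distn k l) x.
Proof.
wlog le_kl : k l / (k <= l)%N.
  by move=> W; case/orP: (leq_total k l) => /W //; rewrite eq_sym distnC.
have [e ->] : exists e, l = (k + e)%N by exists (l - k)%N; rewrite subnKC.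
rewrite distnC distnE ?leq_addr // addKn addnC frob_addn eq_sym.
by apply/eqP/inFqP => [/frob_inj|->].
Qed.

Lemma frob_add_minn k l x :
  x ^+ (2 ^ k) + x ^+ (2 ^ l) =
  x ^+ (2 ^ minn k l) + (x ^+ (2 ^ minn k l)) ^+ (2 ^ distn k l).
Proof.
wlog le_kl : k l / (k <= l)%N.
  by move=> W; case/orP: (leq_total k l) => /W //; rewrite addrC distnC minnC.
by rewrite (minn_idPl le_kl) distnC distnE // -frob_addn subnKC.
Qed.

Lemma unity_rootFq M x : (0 < M)%N -> (x ^+ (2 ^ M - 1) == 1) = inFq M x && (x != 0).
Proof.
move=> M_gt0; have [->|x_neq0] := eqVneq x 0.
  have e_gt0 : (0 < 2 ^ M - 1)%N by rewrite subn_gt0 -{1}(expn0 2) ltn_exp2l.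
  by rewrite expr0n eqn0Ngt e_gt0 /= eq_sym oner_eq0 andbF.
rewrite andbT /inFq -[in RHS](subnK (expn_gt0 2 M)) addn1 exprS.
by rewrite -[X in _ = (_ == X)](mulr1 x) (inj_eq (mulfI x_neq0)).
Qed.

End Frobenius2.

Lemma exists_prim_root (F : finFieldType) D :
  (D %| #|F|.-1)%N -> exists z : F, D.-primitive_root z.
Proof.
move=> dvdD; have N_gt0 : (0 < #|F|.-1)%N by rewrite -subn1 subn_gt0 finNzRing_gt1.
have : has (#|F|.-1).-primitive_root (enum (predC1 (0 : F))).
  apply: has_prim_root => //; rewrite ?enum_uniq // -?cardE ?cardC1 //.
  apply/allP => x; rewrite mem_enum /= unity_rootE => x_neq0.
  apply/eqP/(mulfI x_neq0); rewrite mulr1 -exprS prednK ?expf_card //.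
  exact: ltn_trans (finNzRing_gt1 F).
by case/hasP => g _ g_prim; exists (g ^+ (#|F|.-1 %/ D)); apply: dvdn_prim_root.
Qed.

Lemma unity_root_powerP (F : fieldType) D E (z c : F) :
  D.-primitive_root z -> c ^+ D = 1 ->
  (exists x, x ^+ D = 1 /\ x ^+ E = c) <-> c ^+ (D %/ gcdn E D) = 1.
Proof.
move=> z_prim cD1; have D_gt0 := prim_order_gt0 z_prim.
set G := gcdn E D; have G_D : (G %| D)%N by apply: dvdn_gcdr.
have G_E : (G %| E)%N by apply: dvdn_gcdl.
have G_gt0 : (0 < G)%N by rewrite gcdn_gt0 D_gt0 orbT.
split=> [[x [xD1 <-]]|cDG1].
  have ED : (E * (D %/ G) = D * (E %/ G))%N by rewrite muln_divA // mulnC -muln_divA.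
  by rewrite -exprM ED exprM xD1 expr1n.
have [t ct] := prim_rootP z_prim cD1.
have G_t : (G %| t)%N.
  have : (D %| t * (D %/ G))%N by rewrite (prim_order_dvd z_prim) exprM -ct cDG1.
  by rewrite -{1}(divnK G_D) [(t * _)%N]mulnC dvdn_pmul2l // divn_gt0 // dvdn_leq.
have [E0|E_gt0] := posnP E.
  by exists 1; rewrite !expr1n; move: cDG1; rewrite /G E0 gcd0n divnn D_gt0 expr1.
have [u v Euv _] := egcdnP D E_gt0.
exists (z ^+ (u * (t %/ G))); split.
  by rewrite -exprM mulnC exprM (prim_expr_order z_prim) expr1n.
rewrite -exprM mulnAC Euv mulnDl exprD -mulnA mulnCA exprM (prim_expr_order z_prim) expr1n mul1r.
by rewrite mulnC divnK.
Qed.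

Lemma card_ker_im (V W : finZmodType) (h : V -> W) : {morph h : x y / x + y} ->
  #|V| = (#|[set x | h x == 0%R]| * #|[set h x | x in V]|)%N.
Proof.
move=> hD; have h0 : h 0 = 0 by apply: (@addrI _ (h 0)); rewrite -hD !addr0.
have hB x y : h (x - y) = h x - h y by rewrite -[in RHS](subrK y x) (hD (x - y) y) addrK.
rewrite -[LHS]sum1_card (partition_big h (fun y => y \in [set h x | x in V])) => [|x _];
  last exact: imset_f.
rewrite mulnC -sum_nat_const; apply: eq_bigr => y /imsetP[x0 _ ->].
rewrite sum1dep_card -[RHS](card_imset _ (addIr x0)); apply: eq_card => x.
rewrite !inE; apply/eqP/imsetP => [hx|[z]]; last by rewrite inE => /eqP hz ->; rewrite hD hz add0r.
by exists (x - x0); rewrite ?subrK // inE hB hx subrr.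
Qed.

Lemma ker_comp_sub_eq (V W : finZmodType) (g : V -> V) (h : V -> W) :
  {morph g : x y / x + y} -> {morph h : x y / x + y} ->
  (forall x, h (g x) == 0 -> h x == 0) -> forall x, h x == 0 -> h (g x) == 0.
Proof.
move=> gD hD ker_sub.
have hgD : {morph h \o g : x y / x + y} by move=> x y /=; rewrite gD hD.
have /eqP := card_ker_im hgD; rewrite (card_ker_im hD) /= => card_eq.
have im_sub : [set h (g x) | x in V] \subset [set h x | x in V].
  by apply/subsetP => _ /imsetP[x _ ->]; apply: imset_f.
have ker_sub' : [set x | h (g x) == 0] \subset [set x | h x == 0].
  by apply/subsetP => x; rewrite !inE; apply: ker_sub.
have im_gt0 : (0 < #|[set h (g x) | x in V]|)%N.
  by apply/card_gt0P; exists (h (g 0)); apply: imset_f.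
suff ker_eq : [set x | h (g x) == 0] = [set x | h x == 0].
  by move=> x; have := in_set (fun x => h (g x) == 0) x; rewrite ker_eq inE => <-.
apply/eqP; rewrite eqEcard ker_sub' /=.
move: card_eq (subset_leq_card im_sub) im_gt0.
move: #|[set x | h x == 0]| #|[set h x | x in V]| => K I.
by move: #|[set x | h (g x) == 0]| #|[set h (g x) | x in V]| => K' I' /eqP; nia.
Qed.

Lemma ker_sub_im (V W : finZmodType) (h : V -> V) (t : V -> W) :
  {morph h : x y / x + y} -> {morph t : x y / x + y} ->
  (forall y, t (h y) = 0) -> #|[set x | h x == 0]| = #|[set t x | x in V]| ->
  forall z, t z = 0 -> exists y, h y = z.
Proof.
move=> hD tD th0 card_ker_h.
have card_eq := card_ker_im tD; rewrite (card_ker_im hD) card_ker_h in card_eq.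
have im_gt0 : (0 < #|[set t x | x in V]|)%N by apply/card_gt0P; exists (t 0); apply: imset_f.
have im_sub : [set h x | x in V] \subset [set x | t x == 0].
  by apply/subsetP => _ /imsetP[y _ ->]; rewrite inE th0.
have im_eq : [set h x | x in V] = [set x | t x == 0].
  apply/eqP; rewrite eqEcard im_sub /=; move: card_eq im_gt0.
  by move: #|[set t x | x in V]| #|[set h x | x in V]| #|[set x | t x == 0]| => T H K; nia.
move=> z tz0; have : z \in [set h x | x in V] by rewrite im_eq inE tz0.
by case/imsetP => y _ ->; exists y.
Qed.

Definition lin_binom (R : ringType) k l (a b x : R) : R := a * x ^+ (2 ^ k) + b * x ^+ (2 ^ l).

Section FieldOfOrderQn.
Variables (F : finFieldType) (m n : nat).
Hypotheses (m_gt0 : (0 < m)%N) (n_gt0 : (0 < n)%N) (cardF : #|F| = (2 ^ (m * n))%N).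
Implicit Types (x y z u c : F) (M : nat).

Let pcharF : 2 \in [pchar F] := card_finPcharP cardF (isT : prime 2).
Let mn_gt0 : (0 < m * n)%N. Proof. by rewrite muln_gt0 m_gt0. Qed.

Lemma inFq_mn x : inFq (m * n) x.
Proof. by apply/inFqP; rewrite -cardF expf_card. Qed.

Lemma exists_prim_root_subfield M :
  (M %| m * n)%N -> exists z : F, (2 ^ M - 1).-primitive_root z.
Proof. by move=> M_mn; apply: exists_prim_root; rewrite cardF -subn1 dvdn_exp2_sub1. Qed.

Lemma subfield_dvdn d M : (d %| m * n)%N -> (forall c, inFq d c -> inFq M c) -> (d %| M)%N.
Proof.
move=> d_mn sub_dM; have [->|M_gt0] := posnP M; first exact: dvdn0.
have [z z_prim] := exists_prim_root_subfield d_mn.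
have /eqP := prim_expr_order z_prim.
rewrite unity_rootFq ?(dvdn_gt0 mn_gt0 d_mn) // => /andP[/sub_dM z_M z_neq0].
by rewrite -dvdn_exp2_sub1 (prim_order_dvd z_prim) unity_rootFq // z_M.
Qed.

Lemma exp2_sub1_rootP M e c : (M %| m * n)%N -> (0 < M)%N -> inFq M c -> c != 0 ->
  (exists y, [/\ inFq M y, y != 0 & y ^+ (2 ^ e - 1) = c]) <->
  c ^+ ((2 ^ M - 1) %/ (2 ^ gcdn e M - 1)) = 1.
Proof.
move=> M_mn M_gt0 c_M c_neq0; have [z z_prim] := exists_prim_root_subfield M_mn.
have /eqP c_unit : c ^+ (2 ^ M - 1) == 1 by rewrite unity_rootFq // c_M.
rewrite -gcdn_exp2_sub1 -(unity_root_powerP _ z_prim c_unit).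
split=> [[y [y_M y_neq0 <-]]|[y [/eqP y_unit <-]]]; exists y.
  by split=> //; apply/eqP; rewrite unity_rootFq // y_M.
by move: y_unit; rewrite unity_rootFq // => /andP[].
Qed.

Lemma frob_binomial_rootP M k l (al be : F) :
  (M %| m * n)%N -> (0 < M)%N -> inFq M al -> inFq M be ->
  (exists u, [/\ inFq M u, u != 0 & al * u ^+ (2 ^ k) = be * u ^+ (2 ^ l)]) <->
  al ^+ ((2 ^ M - 1) %/ (2 ^ gcdn (distn k l) M - 1)) =
  be ^+ ((2 ^ M - 1) %/ (2 ^ gcdn (distn k l) M - 1)).
Proof.
move=> M_mn M_gt0 al_M be_M; set E := (_ %/ _)%N.
have E_gt0 : (0 < E)%N by apply: exp2_sub1_divn_gt0 => //; apply: dvdn_gcdr.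
wlog le_kl : k l al be al_M be_M @E E_gt0 / (k <= l)%N.
  move=> W; case/orP: (leq_total k l) => /W; first exact.
  rewrite distnC => /(_ be al be_M al_M E_gt0) [W1 W2].
  by split=> [[u [? ? /esym ?]]|/esym /W2 [u [? ? /esym ?]]]; [apply/esym/W1|]; exists u.
have [->|al_neq0] := eqVneq al 0.
  rewrite expr0n eqn0Ngt E_gt0 /=; split=> [[u [_ u_neq0 /esym/eqP]]|/esym/eqP].
    rewrite mul0r mulf_eq0 expf_eq0 (negbTE u_neq0) andbF orbF => /eqP->.
    by rewrite expr0n eqn0Ngt E_gt0.
  by rewrite expf_eq0 E_gt0 => /eqP->; exists 1; rewrite inFq1 oner_neq0 !mul0r.
have [->|be_neq0] := eqVneq be 0.
  rewrite (expr0n _ E) eqn0Ngt E_gt0 /=; split=> [[u [_ u_neq0 /eqP]]|/eqP].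
    by rewrite mul0r mulf_eq0 expf_eq0 (negbTE u_neq0) (negbTE al_neq0) andbF.
  by rewrite expf_eq0 (negbTE al_neq0) andbF.
have [e Ele] : exists e, l = (k + e)%N by exists (l - k)%N; rewrite subnKC.
subst l; have root_eq y : y != 0 -> al * y = be * y ^+ (2 ^ e) <-> y ^+ (2 ^ e - 1) = al / be.
  move=> y_neq0; rewrite -[in y ^+ (2 ^ e)](subnK (expn_gt0 2 e)) addn1 exprS mulrCA.
  rewrite [al * y]mulrC.
  by split=> [/(mulfI y_neq0) ->|->]; [rewrite mulrAC divff ?mul1r | rewrite [be * _]mulrC divfK].
have -> : al ^+ E = be ^+ E <-> (al / be) ^+ E = 1.
  rewrite expr_div_n; split=> [->|/(congr1 ( *%R^~ (be ^+ E)))]; first by rewrite divff ?expf_neq0.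
  by rewrite mul1r divfK ?expf_neq0.
rewrite /E distnC distnE ?leq_addr // addKn -exp2_sub1_rootP //; last 2 first.
- by apply: inFqM => //; apply: inFqV.
- by rewrite mulf_neq0 ?invr_eq0.
split=> [[u [u_M u_neq0]]|[y [y_M y_neq0]]].
  rewrite frob_addn => root_u; exists (u ^+ (2 ^ k)).
  have uk_neq0 : u ^+ (2 ^ k) != 0 by rewrite expf_neq0.
  by split; rewrite ?inFq_frob // -root_eq.
move=> /(root_eq _ y_neq0) root_y; exists (y ^+ (2 ^ (M * k - k))).
have y_root := inFq_frob_root k M_gt0 y_M.
split; rewrite ?inFqX // ?frob_addn ?y_root //.
by apply: contraNneq y_neq0 => y0; rewrite -y_root y0 expr0n expn_eq0.
Qed.

Lemma TrD x y : Tr m n (x + y) = Tr m n x + Tr m n y.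
Proof. by rewrite /Tr -big_split; apply: eq_bigr => i _; rewrite -expnM frobD. Qed.

Lemma Tr0 : Tr m n (0 : F) = 0.
Proof. by rewrite /Tr big1 // => i _; rewrite expr0n expn_eq0 expn_eq0. Qed.

Lemma Tr_frob y : Tr m n (y ^+ (2 ^ m)) = Tr m n y.
Proof.
have /inFqP := inFq_mn y; rewrite /Tr -(prednK n_gt0) => y_fix.
rewrite big_ord_recr big_ord_recl /= -exprM -expnS -expnM y_fix expr1 addrC; congr (_ + _).
by apply: eq_bigr => i _; rewrite -exprM -expnS.
Qed.

Lemma Tr_frobn j y : Tr m n (y ^+ (2 ^ (m * j))) = Tr m n y.
Proof. by elim: j y => [|j IHj] y; rewrite ?muln0 ?expr1 // mulnS frob_addn IHj Tr_frob. Qed.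

Lemma inFq_Tr y : inFq m (Tr m n y).
Proof.
apply/inFqP; rewrite -[RHS]Tr_frob /Tr (frob_sum pcharF).
by apply: eq_bigr => i _; rewrite exprAC.
Qed.

Lemma TrZ c y : inFq m c -> Tr m n (c * y) = c * Tr m n y.
Proof.
move=> c_m; rewrite /Tr mulr_sumr; apply: eq_bigr => i _.
by rewrite exprMn -expnM; have /inFqP -> := inFq_mull i c_m.
Qed.

Lemma Tr_id c : odd n -> inFq m c -> Tr m n c = c.
Proof.
move=> n_odd c_m; rewrite /Tr (eq_bigr (fun=> c)) => [|i _]; last first.
  by rewrite -expnM; apply/inFqP/inFq_mull.
rewrite sumr_const card_ord -(odd_double_half n) n_odd mulrnDr -muln2 mulnC mulrnA.
by rewrite (mulrn_pchar pcharF) mul0rn addr0.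
Qed.

Lemma Tr_neq0 : exists y, Tr m n y != (0 : F).
Proof.
(* Tr is a nonzero polynomial map of degree q^(n-1) < #|F|. *)
apply/existsP; rewrite -negb_forall; apply/forallP => Tr_eq0.
pose p : {poly F} := \sum_(i < n) 'X^((2 ^ m) ^ i).
have q_gt1 : (1 < 2 ^ m)%N by rewrite -{1}(expn0 2) ltn_exp2l.
have top_lt_n : (n.-1 < n)%N by rewrite prednK.
have p_neq0 : p != 0.
  apply/eqP => /(congr1 (fun r : {poly F} => r`_((2 ^ m) ^ n.-1))).
  rewrite coef_sum coef0 (bigD1 (Ordinal top_lt_n)) //= coefXn eqxx big1 ?addr0.
    by move/eqP; rewrite oner_eq0.
  move=> i /eqP i_neq; rewrite coefXn eqn_exp2l //.
  by case: eqP => // /esym top_i; case: i_neq; apply: val_inj.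
have /(max_poly_roots p_neq0) : all (root p) (enum F).
  apply/allP => y _; rewrite /root /p horner_sum.
  by under eq_bigr => i _ do rewrite hornerXn; apply: Tr_eq0.
rewrite enum_uniq -cardE cardF => /(_ isT) card_lt.
have : (size p <= ((2 ^ m) ^ n.-1).+1)%N.
  apply: leq_trans (size_sum _ _ _) _; apply/bigmax_leqP => i _.
  by rewrite size_polyXn ltnS leq_exp2l // -ltnS prednK.
move/(leq_trans card_lt); rewrite expnM -{1}(prednK n_gt0) expnS.
have X_gt0 : (0 < (2 ^ m) ^ n.-1)%N by rewrite !expn_gt0.
by move: q_gt1 X_gt0; move: (2 ^ m)%N ((2 ^ m) ^ n.-1)%N => Q X; nia.
Qed.

Lemma Tr_surj w t : w != 0 -> inFq m t -> exists x, Tr m n (x * w) = t.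
Proof.
move=> w_neq0 t_m; have [y Try_neq0] := Tr_neq0.
exists (t / Tr m n y * y / w); rewrite mulfVK // TrZ ?divfK //.
by apply: inFqM => //; apply/inFqV/inFq_Tr.
Qed.

(* u^q = u^(q^(n-1)) puts u in F_(q^2), and F_(q^2) meets F_(q^n) in F_q for odd n. *)
Lemma frob_add_frob_inv_eq0 u : odd n ->
  (u ^+ (2 ^ m) + u ^+ (2 ^ (m * n.-1)) == 0) = inFq m u.
Proof.
move=> n_odd; rewrite addr_eq0_pchar2 //; apply/eqP/idP => [u_fix|/inFq_mull u_m].
  have u_2m : inFq (m * 2) u.
    apply/inFqP; rewrite mulnS muln1 frob_addn u_fix -frob_addn -mulnSr prednK //.
    exact/inFqP/inFq_mn.
  have := inFq_gcd pcharF u_2m (inFq_mn u).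
  by rewrite -muln_gcdr (eqP (_ : coprime 2 n)) ?coprime2n // muln1.
by rewrite (eqP (u_m n.-1)) -[in LHS](muln1 m) (eqP (u_m 1%N)).
Qed.

Lemma Tr_exp_qS u : odd n -> inFq m u -> Tr m n (u ^+ (2 ^ m + 1)) = u ^+ 2.
Proof.
by move=> n_odd u_m; rewrite exprD expr1 (eqP u_m) -expr2 Tr_id // inFqX.
Qed.

Lemma Tr_image : [set Tr m n x | x in F] = [set x | inFq m x].
Proof.
apply/setP => t; rewrite inE; apply/imsetP/idP => [[y _ ->]|t_m]; first exact: inFq_Tr.
by have [x <-] := Tr_surj (oner_neq0 F) t_m; exists (x * 1).
Qed.

Lemma additive_hilbert90 e : gcdn e (m * n) = m ->
  forall z, Tr m n z = 0 -> exists y, y + y ^+ (2 ^ e) = z.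
Proof.
move=> gcd_e; have m_e : (m %| e)%N by rewrite -gcd_e dvdn_gcdl.
apply: ker_sub_im => [x y|x y|y|]; rewrite ?TrD //.
- by rewrite frobD // addrACA.
- by rewrite -(divnK m_e) mulnC Tr_frobn addrr_pchar2.
rewrite Tr_image; apply: eq_card => y; rewrite !inE addr_eq0_pchar2 // eq_sym.
apply/eqP/idP => [y_e|/(inFq_dvdn m_e)/eqP //].
by rewrite -gcd_e; apply: (inFq_gcd pcharF _ (inFq_mn y)); apply/eqP.
Qed.

Section LinearizedBinomial.
Variables (k l : nat) (a b : F).
Local Notation L := (lin_binom k l a b).
Local Notation f := (fmap m n k l a b).
Let d := gcdn (distn l k) (m * n).

Lemma lin_binomD x y : L (x + y) = L x + L y.
Proof. by rewrite /lin_binom !frobD // !mulrDr addrACA. Qed.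

Lemma lin_binom_eq0 x : (L x == 0) = (a * x ^+ (2 ^ k) == b * x ^+ (2 ^ l)).
Proof. exact: addr_eq0_pchar2. Qed.

Lemma fmap_addr x u : f (x + u) =
  f x + (Tr m n (x * (u ^+ (2 ^ m) + u ^+ (2 ^ (m * n.-1)))) + Tr m n (u ^+ (2 ^ m + 1)) + L u).
Proof.
have Tr_cross : Tr m n (x ^+ (2 ^ m) * u) = Tr m n (x * u ^+ (2 ^ (m * n.-1))).
  rewrite -(Tr_frobn n.-1) exprMn -frob_addn -mulnS prednK //.
  by rewrite (eqP (inFq_mn x)).
have expS_D : (x + u) ^+ (2 ^ m + 1) =
    x ^+ (2 ^ m + 1) + (x ^+ (2 ^ m) * u + x * u ^+ (2 ^ m)) + u ^+ (2 ^ m + 1).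
  by rewrite !exprD !expr1 frobD //; ring.
rewrite /fmap expS_D [x * (_ + _)]mulrDr !TrD Tr_cross /lin_binom !frobD //; ring.
Qed.

Lemma fmap_addr_Fq x u : odd n -> inFq m u -> f (x + u) = f x + (u ^+ 2 + L u).
Proof.
move=> n_odd u_m; have w0 : u ^+ (2 ^ m) + u ^+ (2 ^ (m * n.-1)) == 0.
  by rewrite frob_add_frob_inv_eq0.
by rewrite fmap_addr (eqP w0) mulr0 Tr0 add0r Tr_exp_qS.
Qed.

Lemma PP_criterion : odd n -> is_PP f <->
  (forall u, inFq m (L u) -> inFq m u) /\ (forall u, inFq m u -> u != 0 -> L u != u ^+ 2).
Proof.
move=> n_odd; split=> [/bij_inj f_inj|[preimFq no_sqr]]; last first.
  apply: injF_bij => x y fxy; set u := y - x; have yE : y = x + u by rewrite addrC subrK.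
  have /eqP := fmap_addr x u; rewrite -yE -fxy -[X in X == _]addr0 (inj_eq (addrI _)).
  rewrite eq_sym addr_eq0_pchar2 // => /eqP Lu.
  have u_m : inFq m u by apply: preimFq; rewrite -Lu inFqD ?inFq_Tr.
  have : u ^+ 2 + L u == 0.
    by rewrite -(inj_eq (addrI (f x))) addr0 -fmap_addr_Fq // -yE fxy.
  rewrite addr_eq0_pchar2 // eq_sym => Lu_sq.
  by apply/esym/eqP; rewrite -subr_eq0 -/u; apply: contraTT Lu_sq; apply: no_sqr.
split=> [u Lu_m|u u_m u_neq0].
  apply: contraT => u_out; have w_neq0 : u ^+ (2 ^ m) + u ^+ (2 ^ (m * n.-1)) != 0.
    by rewrite frob_add_frob_inv_eq0.
  have [x Trx] := Tr_surj w_neq0 (inFqD pcharF (inFq_Tr (u ^+ (2 ^ m + 1))) Lu_m).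
  have := fmap_addr x u; rewrite Trx -[_ + L u + _ + _]addrA addrr_pchar2 // addr0.
  by rewrite -[in RHS](addr0 x) => /f_inj/addrI u0; rewrite u0 inFq0 in u_out.
apply: contra u_neq0 => /eqP Lu_sq.
have := fmap_addr_Fq 0 n_odd u_m; rewrite Lu_sq addrr_pchar2 // addr0 add0r.
by move/f_inj ->.
Qed.

Lemma lin_binom_Fq_stable :
  (forall u, inFq m (L u) -> inFq m u) -> forall u, inFq m u -> inFq m (L u).
Proof.
(* With h y := y^q + y, whose kernel is F_q, the hypothesis says ker (h \o L) \subset ker h. *)
pose h y := y ^+ (2 ^ m) + y; have inFqE y : inFq m y = (h y == 0).
  by rewrite addr_eq0_pchar2.
have hD : {morph h : x y / x + y} by move=> x y; rewrite /h frobD // addrACA.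
move=> preimFq u; rewrite !inFqE; apply: ker_comp_sub_eq hD _ u => [x y|x].
  exact: lin_binomD.
by rewrite -!inFqE; apply: preimFq.
Qed.

Lemma lin_binom_frob u : inFq m a -> inFq m b -> L u ^+ (2 ^ m) = L (u ^+ (2 ^ m)).
Proof.
move=> /eqP a_fix /eqP b_fix.
by rewrite /lin_binom frobD // !exprMn a_fix b_fix ![_ ^+ (2 ^ m) ^+ _]exprAC.
Qed.

Lemma lin_binom_nonzero_rootP :
  (exists x, x != 0 /\ L x = 0) <->
  a ^+ (((2 ^ m) ^ n - 1) %/ (2 ^ d - 1)) = b ^+ (((2 ^ m) ^ n - 1) %/ (2 ^ d - 1)).
Proof.
rewrite /d -expnM distnC -(frob_binomial_rootP k l (dvdnn _)) ?inFq_mn //.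
split=> [[x [x_neq0 /eqP]]|[x [_ x_neq0 /eqP]]]; rewrite ?lin_binom_eq0 => /eqP root_x.
  by exists x; rewrite inFq_mn.
by exists x; split=> //; apply/eqP; rewrite lin_binom_eq0 root_x.
Qed.

Lemma lin_binom_root_mulr x c : inFq d c -> L x = 0 -> L (x * c) = 0.
Proof.
move=> /(inFq_dvdn (dvdn_gcdl _ _)); rewrite distnC -frob_eq_distn // => /eqP ckl.
by rewrite /lin_binom !exprMn -ckl !mulrA -mulrDl => ->; rewrite mul0r.
Qed.

Lemma lin_binom_root_ratio x0 x :
  b != 0 -> x0 != 0 -> L x0 = 0 -> L x = 0 -> inFq d (x / x0).
Proof.
move=> b_neq0 x0_neq0 /eqP; rewrite lin_binom_eq0 => /eqP root_x0 /eqP.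
rewrite -[x in L x](divfK x0_neq0); move: (x / x0) => c.
have bx0_neq0 : b * x0 ^+ (2 ^ l) != 0 by rewrite mulf_neq0 ?expf_neq0.
rewrite lin_binom_eq0 !exprMn mulrCA root_x0 [b * (_ * _)]mulrCA (inj_eq (mulIf bx0_neq0)).
by rewrite frob_eq_distn // distnC => c_distn; apply: inFq_gcd c_distn (inFq_mn _).
Qed.

Lemma preim_Fq_of_ker_Fq : odd n -> inFq m a -> inFq m b ->
  (forall x, L x = 0 -> inFq m x) -> forall u, inFq m (L u) -> inFq m u.
Proof.
(* t := u^q + u is a root of L with trace 0 lying in F_q, so t = Tr t = 0. *)
move=> n_odd a_m b_m ker_sub u Lu_m; set t := u ^+ (2 ^ m) + u.
have t_m : inFq m t.
  by apply: ker_sub; rewrite lin_binomD -lin_binom_frob // (eqP Lu_m) addrr_pchar2.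
have : t == 0 by rewrite -(Tr_id n_odd t_m) TrD Tr_frob addrr_pchar2.
by rewrite addr_eq0_pchar2.
Qed.

Lemma lin_binom_neq_sqrP (al be : F) : inFq m al -> inFq m be ->
  (forall u, inFq m u -> L u + u ^+ 2 = al * u ^+ (2 ^ k) + be * u ^+ 2) ->
  (forall u, inFq m u -> u != 0 -> L u != u ^+ 2) <->
  al ^+ ((2 ^ m - 1) %/ (2 ^ gcdn (distn k 1) m - 1)) !=
  be ^+ ((2 ^ m - 1) %/ (2 ^ gcdn (distn k 1) m - 1)).
Proof.
move=> al_m be_m L_sqr.
have rootP := frob_binomial_rootP k 1 (dvdn_mulr n (dvdnn m)) m_gt0 al_m be_m.
have sqrE u : inFq m u -> (L u == u ^+ 2) = (al * u ^+ (2 ^ k) == be * u ^+ 2).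
  by move=> u_m; rewrite -[LHS]addr_eq0_pchar2 // -[RHS]addr_eq0_pchar2 // L_sqr.
split=> [no_sqr|/eqP E_neq u u_m u_neq0]; last first.
  by rewrite sqrE //; apply/eqP => root_u; apply/E_neq/rootP; exists u; rewrite expn1.
by apply/eqP => /rootP[u [u_m u_neq0]]; apply/eqP; rewrite expn1 -sqrE ?no_sqr.
Qed.

Lemma lin_binom_eqmod u : (k = l %[mod m])%N -> inFq m u -> L u = (a + b) * u ^+ (2 ^ k).
Proof. by move=> kl u_m; rewrite /lin_binom (frob_eqmod u_m (esym kl)) mulrDl. Qed.

Lemma lin_binom_coeffs_Fq : (l = 1 %[mod m])%N -> (k != 1 %[mod m])%N ->
  (forall u, inFq m u -> inFq m (L u)) -> inFq m a /\ inFq m b.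
Proof.
move=> l1 k1 L_stable.
have frob_diff u : inFq m u -> (a ^+ (2 ^ m) + a) * u ^+ (2 ^ k) = (b ^+ (2 ^ m) + b) * u ^+ 2.
  move=> u_m; have /eqP := L_stable u u_m; rewrite /lin_binom (frob_eqmod u_m l1) expn1.
  rewrite frobD // !exprMn ![_ ^+ (2 ^ _) ^+ (2 ^ m)]exprAC (eqP u_m) => L_fix.
  apply/eqP; rewrite -addr_eq0_pchar2 //.
  have -> : (a ^+ (2 ^ m) + a) * u ^+ (2 ^ k) + (b ^+ (2 ^ m) + b) * u ^+ 2 =
    (a ^+ (2 ^ m) * u ^+ (2 ^ k) + b ^+ (2 ^ m) * u ^+ 2) + (a * u ^+ (2 ^ k) + b * u ^+ 2) by ring.
  by rewrite L_fix addrr_pchar2.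
have ab_diff := frob_diff 1 (inFq1 _ _); rewrite !expr1n !mulr1 in ab_diff.
suff b_diff0 : b ^+ (2 ^ m) + b = 0.
  by split; rewrite /inFq -addr_eq0_pchar2 // ?ab_diff b_diff0.
apply: contraNeq k1 => b_diff_neq0; rewrite eqn_mod_distn.
apply: (dvdn_trans _ (dvdn_gcdl _ (m * n))).
apply: (@subfield_dvdn m) (dvdn_mulr _ (dvdnn m)) _ => u u_m.
apply: (inFq_gcd pcharF _ (inFq_mn u)); rewrite -frob_eq_distn // expn1.
by rewrite -(inj_eq (mulfI b_diff_neq0)) -frob_diff // ab_diff.
Qed.

Hypothesis L_neq0 : exists x, L x != 0.

Lemma lin_binom_ker_FqP : inFq m a -> inFq m b ->
  (forall x, L x = 0 -> inFq m x) <->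
  a ^+ (((2 ^ m) ^ n - 1) %/ (2 ^ d - 1)) != b ^+ (((2 ^ m) ^ n - 1) %/ (2 ^ d - 1))
  \/ ((d %| m)%N /\ a ^+ ((2 ^ m - 1) %/ (2 ^ d - 1)) = b ^+ ((2 ^ m - 1) %/ (2 ^ d - 1))).
Proof.
move=> a_m b_m; have d_mn : (d %| m * n)%N by apply: dvdn_gcdr.
have rootP (d_m : (d %| m)%N) : (exists u, [/\ inFq m u, u != 0 & L u = 0]) <->
    a ^+ ((2 ^ m - 1) %/ (2 ^ d - 1)) = b ^+ ((2 ^ m - 1) %/ (2 ^ d - 1)).
  rewrite /d -(gcdn_mulr_dvd d_m) distnC -frob_binomial_rootP ?dvdn_mulr //.
  by split=> -[u [u_m u_neq0 /eqP]]; rewrite ?lin_binom_eq0 => /eqP root_u; exists u;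
    split=> //; apply/eqP; rewrite ?lin_binom_eq0 root_u.
split=> [ker_sub|[ED_neq x Lx0|[d_m E_eq] x Lx0]].
- have [ED_eq|] := eqVneq; [right | by left].
  have [x0 [x0_neq0 Lx0]] := proj2 lin_binom_nonzero_rootP ED_eq.
  have x0_m := ker_sub x0 Lx0.
  suff d_m : (d %| m)%N by split=> //; apply/rootP => //; exists x0.
  apply: (@subfield_dvdn d m d_mn) => c c_d; rewrite -(mulKf x0_neq0 c).
  by apply/inFqM/ker_sub/lin_binom_root_mulr => //; apply/inFqV.
- have [->|x_neq0] := eqVneq x 0; first exact: inFq0.
  by case/eqP: ED_neq; apply/lin_binom_nonzero_rootP; exists x.
have [u [u_m u_neq0 Lu0]] := proj2 (rootP d_m) E_eq.
have b_neq0 : b != 0.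
  have E_gt0 := exp2_sub1_divn_gt0 m_gt0 d_m.
  apply/eqP => b0; move: E_eq; rewrite b0 expr0n eqn0Ngt E_gt0 /= => /eqP.
  rewrite expf_eq0 E_gt0 => /eqP a0.
  by case: L_neq0 => y; rewrite /lin_binom a0 b0 !mul0r addr0 eqxx.
rewrite -(divfK u_neq0 x); apply: inFqM u_m.
exact/(inFq_dvdn d_m)/(lin_binom_root_ratio b_neq0 u_neq0).
Qed.

Lemma preimFq_eqmod_sum_neq0 : (k = l %[mod m])%N -> inFq m (a + b) -> a + b != 0 ->
  (forall u, inFq m (L u) -> inFq m u) <->
  a ^+ (((2 ^ m) ^ n - 1) %/ (2 ^ d - 1)) != b ^+ (((2 ^ m) ^ n - 1) %/ (2 ^ d - 1)).
Proof.
move=> kl ab_m ab_neq0; split=> [preimFq|ED_neq u Lu_m].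
  apply/eqP => /lin_binom_nonzero_rootP[x [x_neq0 Lx0]].
  have x_m : inFq m x by apply: preimFq; rewrite Lx0 inFq0.
  move/eqP: Lx0; rewrite lin_binom_eqmod // mulf_eq0 expf_eq0.
  by rewrite (negbTE ab_neq0) (negbTE x_neq0) andbF.
set v := ((a + b)^-1 * L u) ^+ (2 ^ (m * k - k)).
have vk : v ^+ (2 ^ k) = (a + b)^-1 * L u.
  by apply: inFq_frob_root => //; apply: inFqM Lu_m; apply: inFqV.
have v_m : inFq m v by rewrite -(inFq_frob pcharF _ k) vk; apply: inFqM Lu_m; apply: inFqV.
have Lv : L v = L u by rewrite lin_binom_eqmod // vk mulVKf.
have : u + v == 0.
  apply: contraR ED_neq => uv_neq0; apply/eqP/lin_binom_nonzero_rootP.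
  by exists (u + v); rewrite lin_binomD Lv addrr_pchar2.
by rewrite addr_eq0_pchar2 // => /eqP ->.
Qed.

Lemma preimFq_eqmod_sum_eq0 : (k = l %[mod m])%N -> a + b = 0 ->
  (forall u, inFq m (L u) -> inFq m u) <-> d = m /\ Tr m n a^-1 != 0.
Proof.
move=> kl ab0; have /eqP ba : b == a by rewrite eq_sym -addr_eq0_pchar2 // ab0.
have a_neq0 : a != 0.
  by case: L_neq0 => y; apply: contraNneq => a0; rewrite /lin_binom ba a0 !mul0r addr0.
set e := distn l k; pose y u := u ^+ (2 ^ minn k l).
have L_hilb u : L u = a * (y u + y u ^+ (2 ^ e)).
  by rewrite /lin_binom ba -mulrDr frob_add_minn distnC.
have m_e : (m %| e)%N by rewrite -eqn_mod_distn kl.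
have m_d : (m %| d)%N by rewrite dvdn_gcd m_e dvdn_mulr.
split=> [preimFq|[d_m Tr_neq0] u Lu_m].
  have d_m : (d %| m)%N.
    apply: (@subfield_dvdn d m (dvdn_gcdr _ _)) => c c_d; apply: preimFq.
    have -> : L c = L (1 * c) by rewrite mul1r.
    by rewrite lin_binom_root_mulr ?inFq0 // /lin_binom !expr1n !mulr1.
  have d_eq : d = m by apply/eqP; rewrite eqn_dvd d_m m_d.
  split=> //; apply/eqP => Tr_inv0.
  have [z hz] := additive_hilbert90 d_eq Tr_inv0.
  pose u := z ^+ (2 ^ (m * n * minn k l - minn k l)).
  have Lu1 : L u = 1 by rewrite L_hilb /y inFq_frob_root ?inFq_mn // hz mulfV.
  have u_m : inFq m u by apply: preimFq; rewrite Lu1 inFq1.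
  by move: Lu1; rewrite lin_binom_eqmod // ab0 mul0r => /eqP; rewrite eq_sym oner_eq0.
have : Tr m n (L u * a^-1) = 0.
  by rewrite mulrC L_hilb mulKf // TrD -(divnK m_e) mulnC Tr_frobn addrr_pchar2.
rewrite TrZ // => /eqP; rewrite mulf_eq0 (negbTE Tr_neq0) orbF L_hilb mulf_eq0 (negbTE a_neq0).
rewrite /= addr_eq0_pchar2 // eq_sym => /eqP y_e.
rewrite -(inFq_frob pcharF _ (minn k l)) -d_m.
by apply: (inFq_gcd pcharF _ (inFq_mn _)); apply/eqP.
Qed.

Lemma PP_eqmod : odd n -> (k = l %[mod m])%N ->
  is_PP f <->
  ((inFq m (a + b) /\ a + b != 0
    /\ (a + b) ^+ ((2 ^ m - 1) %/ (2 ^ gcdn (distn k 1) m - 1)) != 1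
    /\ a ^+ (((2 ^ m) ^ n - 1) %/ (2 ^ d - 1)) != b ^+ (((2 ^ m) ^ n - 1) %/ (2 ^ d - 1)))
   \/ (a + b = 0 /\ d = m /\ Tr m n a^-1 != 0)).
Proof.
move=> n_odd kl; have L_sqr u : inFq m u -> L u + u ^+ 2 = (a + b) * u ^+ (2 ^ k) + 1 * u ^+ 2.
  by move=> u_m; rewrite lin_binom_eqmod // mul1r.
have no_sqrP ab_m := lin_binom_neq_sqrP ab_m (inFq1 _ _) L_sqr; rewrite expr1n in no_sqrP.
rewrite PP_criterion //; split=> [[preimFq no_sqr]|[[ab_m [ab_neq0 [E_neq ED_neq]]]|[ab0 dm_Tr]]].
- have ab_m : inFq m (a + b).
    by have := lin_binom_Fq_stable preimFq (inFq1 _ _); rewrite /lin_binom !expr1n !mulr1.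
  have [ab0|ab_neq0] := eqVneq (a + b) 0; [right | left].
    by split=> //; apply/preimFq_eqmod_sum_eq0.
  by do !split=> //; [apply/no_sqrP | apply/preimFq_eqmod_sum_neq0].
- by split; [apply/preimFq_eqmod_sum_neq0 | apply/no_sqrP].
split; first exact/preimFq_eqmod_sum_eq0.
by move=> u u_m u_neq0; rewrite lin_binom_eqmod // ab0 mul0r eq_sym expf_neq0.
Qed.

Lemma PP_l_eqmod1 : odd n -> ~ (k = l %[mod m])%N -> (l = 1 %[mod m])%N ->
  is_PP f <->
  (inFq m a /\ inFq m b
   /\ a ^+ ((2 ^ m - 1) %/ (2 ^ gcdn (distn k 1) m - 1))
       != (b + 1) ^+ ((2 ^ m - 1) %/ (2 ^ gcdn (distn k 1) m - 1))
   /\ (a ^+ (((2 ^ m) ^ n - 1) %/ (2 ^ d - 1)) != b ^+ (((2 ^ m) ^ n - 1) %/ (2 ^ d - 1))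
       \/ ((d %| m)%N /\ a ^+ ((2 ^ m - 1) %/ (2 ^ d - 1)) = b ^+ ((2 ^ m - 1) %/ (2 ^ d - 1))))).
Proof.
move=> n_odd kl l1; have k1 : (k != 1 %[mod m])%N by apply/eqP => k1; apply: kl; rewrite k1 l1.
have L_sqr u : inFq m u -> L u + u ^+ 2 = a * u ^+ (2 ^ k) + (b + 1) * u ^+ 2.
  by move=> u_m; rewrite /lin_binom (frob_eqmod u_m l1) expn1 mulrDl mul1r addrA.
have no_sqrP a_m b_m := lin_binom_neq_sqrP a_m (inFqD pcharF b_m (inFq1 _ _)) L_sqr.
rewrite PP_criterion //; split=> [[preimFq no_sqr]|[a_m [b_m [E_neq ker_cond]]]].
  have [a_m b_m] := lin_binom_coeffs_Fq l1 k1 (lin_binom_Fq_stable preimFq).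
  do !split=> //; first by apply/no_sqrP.
  by apply/lin_binom_ker_FqP => // x Lx0; apply: preimFq; rewrite Lx0 inFq0.
split; last exact/no_sqrP.
by apply: preim_Fq_of_ker_Fq => //; apply/lin_binom_ker_FqP.
Qed.

Lemma PP_monomial : odd n -> b = 0 ->
  is_PP f <->
  (inFq m a /\ a != 0 /\ a ^+ ((2 ^ m - 1) %/ (2 ^ gcdn (distn k 1) m - 1)) != 1).
Proof.
move=> n_odd b0; have Lu u : L u = a * u ^+ (2 ^ k) by rewrite /lin_binom b0 mul0r addr0.
have a_neq0 : a != 0 by case: L_neq0 => y; apply: contraNneq => a0; rewrite Lu a0 mul0r.
have L_sqr u : inFq m u -> L u + u ^+ 2 = a * u ^+ (2 ^ k) + 1 * u ^+ 2.
  by rewrite Lu mul1r.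
have no_sqrP a_m := lin_binom_neq_sqrP a_m (inFq1 _ _) L_sqr; rewrite expr1n in no_sqrP.
rewrite PP_criterion //; split=> [[preimFq no_sqr]|[a_m [_ E_neq]]].
  have a_m : inFq m a by have := lin_binom_Fq_stable preimFq (inFq1 _ _); rewrite Lu expr1n mulr1.
  by do !split=> //; apply/no_sqrP.
split; last exact/no_sqrP.
by move=> u; rewrite Lu => /(inFqM (inFqV a_m)); rewrite mulKf // inFq_frob.
Qed.

End LinearizedBinomial.

End FieldOfOrderQn.

Theorem mainTheorem3 (F : finFieldType) (m n k l : nat) (a b : F) :
  (0 < m)%N -> #|F| = (2 ^ (m * n))%N -> odd n ->
  (k < m * n)%N -> (l < m * n)%N ->
  (exists x : F, a * x ^+ (2 ^ k) + b * x ^+ (2 ^ l) != 0) ->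
  let q := (2 ^ m)%N in
  let d := gcdn (distn l k) (m * n) in
  let s := gcdn (distn k 1) m in
  (* (1) *)
  ((k = l %[mod m])%N ->
     (is_PP (fmap m n k l a b) <->
       ((inFq m (a + b) /\ a + b != 0
         /\ (a + b) ^+ ((q - 1) %/ (2 ^ s - 1)) != 1
         /\ a ^+ ((q ^ n - 1) %/ (2 ^ d - 1)) != b ^+ ((q ^ n - 1) %/ (2 ^ d - 1)))
        \/
        (a + b = 0 /\ d = m /\ Tr m n a^-1 != 0))))
  /\
  (* (2) *)
  (~ (k = l %[mod m])%N -> (l = 1 %[mod m])%N ->
     (is_PP (fmap m n k l a b) <->
       (inFq m a /\ inFq m b
        /\ a ^+ ((q - 1) %/ (2 ^ s - 1)) != (b + 1) ^+ ((q - 1) %/ (2 ^ s - 1))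
        /\ (a ^+ ((q ^ n - 1) %/ (2 ^ d - 1)) != b ^+ ((q ^ n - 1) %/ (2 ^ d - 1))
            \/ ((d %| m)%N
                /\ a ^+ ((q - 1) %/ (2 ^ d - 1)) = b ^+ ((q - 1) %/ (2 ^ d - 1)))))))
  /\
  (* (3) *)
  (b = 0 ->
     (is_PP (fmap m n k l a b) <->
       (inFq m a /\ a != 0 /\ a ^+ ((q - 1) %/ (2 ^ s - 1)) != 1))).
Proof.
move=> m_gt0 cardF n_odd _ _ L_neq0 q d s; rewrite /q /d /s.
have n_gt0 := odd_gt0 n_odd.
split; first exact: PP_eqmod.
split; first exact: PP_l_eqmod1.
exact: PP_monomial.
Qed.
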